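(* For all integers $m,n\ge 0$, $$\frac{1}{n!}D_{m+n}=\sum_{l=0}^{n}\sum_{k=0}^{m}\binom{k+n-l-1}{n-l}\binom{m}{k}(-1)^{m-k}\frac{k!}{l!}\,D_l,$$ where $D_j$ denotes the $j$-th derangement number.
   Context: For a nonnegative integer $j$, the derangement number is $D_j=j!\sum_{i=0}^{j}\frac{(-1)^i}{i!}$ (the number of permutations of a $j$-element set with no fixed points); equivalently $\frac{e^{-t}}{1-t}=\sum_{j\ge 0}D_j\frac{t^j}{j!}$. Binomial coefficients are the generalized ones: for any real (or integer, possibly negative) $a$ and integer $j\ge 0$, $\binom{a}{j}=\frac{a(a-1)\cdots(a-j+1)}{j!}$, with $\binom{a}{0}=1$; in particular $\binom{-1}{0}=1$. *)

From mathcomp Require Import all_boot all_order all_algebra.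
Set Implicit Arguments. Unset Strict Implicit. Unset Printing Implicit Defensive.
Import Order.TTheory GRing.Theory Num.Theory.
Local Open Scope ring_scope.

Definition derange (j : nat) : rat :=
  (j`!)%:R * \sum_(i < j.+1) (-1) ^+ i / (i`!)%:R.

Definition gbinom (a : int) (j : nat) : rat :=
  (\prod_(i < j) (a%:~R - i%:R)) / (j`!)%:R.

From mathcomp Require Import all_boot all_order all_algebra.
From mathcomp Require Import zify ring.
Set Implicit Arguments.
Unset Strict Implicit.
Unset Printing Implicit Defensive.
Import Order.TTheory GRing.Theory Num.Theory.
Local Open Scope ring_scope.

(* Write D_l / l! = \sum_(i <= l) (-1)^i / i!.  Summation by parts and the
   hockey-stick identity collapse the sum over l, leaving
   \sum_i (-1)^i / i! * \sum_k (-1)^(m-k) C(m,k) (k + n - i)! / (n - i)!.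
   Reversing k and multiplying by n! gives
   \sum_(i,j) (-1)^(i+j) C(n,i) C(m,j) (m + n - i - j)!, which Vandermonde's
   convolution turns into the inclusion-exclusion formula
   \sum_t (-1)^t C(m+n,t) (m + n - t)! = D_(m+n). *)

Lemma exchange_big_triangle (R : nmodType) (n : nat) (F : nat -> nat -> R) :
  \sum_(i < n.+1) \sum_(j < (n - i).+1) F i j =
  \sum_(j < n.+1) \sum_(i < (n - j).+1) F i j.
Proof.
have widen (G : nat -> nat -> R) i : (i < n.+1)%N ->
    \sum_(j < (n - i).+1) G i j =
    \sum_(j < n.+1) (if (i + j <= n)%N then G i j else 0).
  move=> lt_in; rewrite (big_ord_widen n.+1 (G i)) ?ltnS ?leq_subr // big_mkcond.
  by apply: eq_bigr => j _; congr (if _ then _ else _); lia.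
rewrite (eq_bigr _ (fun (i : 'I_n.+1) _ => widen F i (ltn_ord i))) exchange_big.
apply: eq_bigr => j _; rewrite (widen (fun j i => F i j)) //.
by apply: eq_bigr => i _; rewrite [(j + i)%N]addnC.
Qed.

Lemma sum_partial_sums_mul (R : pzSemiRingType) (a c : nat -> R) (n : nat) :
  \sum_(l < n.+1) (\sum_(i < l.+1) a i) * c (n - l)%N =
  \sum_(i < n.+1) a i * \sum_(j < (n - i).+1) c j.
Proof.
rewrite (reindex_inj rev_ord_inj) /=.
transitivity (\sum_(j < n.+1) \sum_(i < (n - j).+1) a i * c j).
  by apply: eq_bigr => j _; rewrite subSS subKn ?leq_ord // mulr_suml.
rewrite -(exchange_big_triangle n (fun i j => a i * c j)).
by apply: eq_bigr => i _; rewrite mulr_sumr.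
Qed.

Lemma sum_bin_pred (k N : nat) :
  \sum_(j < N.+1) 'C((k + j).-1, j) = 'C(k + N, N).
Proof.
elim: N => [|N IHN]; first by rewrite big_ord1 !bin0.
by rewrite big_ord_recr /= IHN addnS binS addrC.
Qed.

Lemma sum_partial_sums_bin_pred (R : pzSemiRingType) (a : nat -> R) (k n : nat) :
  \sum_(l < n.+1) (\sum_(i < l.+1) a i) * ('C((k + (n - l)).-1, n - l))%:R =
  \sum_(i < n.+1) a i * ('C(k + (n - i), n - i))%:R.
Proof.
rewrite (sum_partial_sums_mul a (fun j => ('C((k + j).-1, j))%:R)).
by apply: eq_bigr => i _; rewrite -natr_sum sum_bin_pred.
Qed.

Section CoefPairing.
Variables (R : comNzRingType) (B : nat) (g : nat -> R).

Definition coef_pairing (p : {poly R}) : R := \sum_(t < B) p`_t * g t.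

Lemma coef_pairing_sum (I : Type) (r : seq I) (F : I -> {poly R}) :
  coef_pairing (\sum_(i <- r) F i) = \sum_(i <- r) coef_pairing (F i).
Proof.
rewrite /coef_pairing exchange_big /=; apply: eq_bigr => t _.
by rewrite coef_sum mulr_suml.
Qed.

Lemma coef_pairing_mulrn (p : {poly R}) (k : nat) :
  coef_pairing (p *+ k) = coef_pairing p *+ k.
Proof.
rewrite /coef_pairing -sumrMnl.
by apply: eq_bigr => t _; rewrite coefMn mulrnAl.
Qed.

Lemma coef_pairing_Xn (t : nat) : (t < B)%N -> coef_pairing 'X^t = g t.
Proof.
move=> lt_tB; rewrite /coef_pairing (bigD1 (Ordinal lt_tB)) //= coefXn eqxx mul1r.
rewrite big1 ?addr0 // => s neq_st; rewrite coefXn.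
by case: eqP => [eq_st | _]; [case/eqP: neq_st; apply: val_inj | rewrite mul0r].
Qed.

End CoefPairing.

(* Pair both sides of (X + 1)^(n + m) = (X + 1)^n * (X + 1)^m with g. *)
Lemma binomial_convolution (R : comNzRingType) (g : nat -> R) (n m : nat) :
  \sum_(i < n.+1) \sum_(k < m.+1) g (i + k)%N *+ ('C(n, i) * 'C(m, k)) =
  \sum_(t < (n + m).+1) g t *+ 'C(n + m, t).
Proof.
have pairing_expD1n N : (N <= n + m)%N ->
    coef_pairing (n + m).+1 g (('X + 1) ^+ N) = \sum_(t < N.+1) g t *+ 'C(N, t).
  move=> le_N; rewrite exprD1n coef_pairing_sum; apply: eq_bigr => t _.
  by rewrite coef_pairing_mulrn coef_pairing_Xn // ltnS (leq_trans (leq_ord t)).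
rewrite -pairing_expD1n // exprD !exprD1n mulr_suml coef_pairing_sum.
apply: eq_bigr => i _; rewrite mulr_sumr coef_pairing_sum; apply: eq_bigr => k _.
rewrite mulrnAr mulrnAl -mulrnA -exprD coef_pairing_mulrn coef_pairing_Xn //.
by rewrite ltnS leq_add ?leq_ord.
Qed.

Lemma natr_fact_neq0 (F : numFieldType) (j : nat) : (j`!)%:R != 0 :> F.
Proof. by rewrite pnatr_eq0 -lt0n fact_gt0. Qed.

Lemma prod_natr_sub (R : pzRingType) (a j : nat) :
  \prod_(i < j) (a%:R - i%:R : R) = (a ^_ j)%:R.
Proof.
elim: j => [|j IHj]; first by rewrite big_ord0 ffactn0.
rewrite big_ord_recr /= IHj ffactnSr natrM.
case: (leqP j a) => [le_ja | lt_aj]; first by rewrite natrB.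
by rewrite ffact_small // !mul0r.
Qed.

Lemma gbinom_nat (a j : nat) : gbinom a j = ('C(a, j))%:R.
Proof. by rewrite /gbinom prod_natr_sub -bin_ffact natrM mulfK ?natr_fact_neq0. Qed.

Lemma gbinom_pred (k j : nat) :
  gbinom (k%:Z + j%:Z - 1) j = ('C((k + j).-1, j))%:R.
Proof.
case: (posnP (k + j)) => [kj0 | kj_gt0].
  have [-> ->] : k = 0%N /\ j = 0%N by lia.
  by rewrite /gbinom big_ord0 fact0 bin0 divr1.
rewrite -PoszD -{1}(prednK kj_gt0) -addn1 PoszD addrK.
exact: gbinom_nat.
Qed.

Lemma derange_div_fact (l : nat) :
  derange l / (l`!)%:R = \sum_(i < l.+1) (-1) ^+ i / (i`!)%:R.
Proof. by rewrite mulrC mulKf ?natr_fact_neq0. Qed.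

Lemma derange_incl_excl (N : nat) :
  derange N = \sum_(t < N.+1) (-1) ^+ t * ('C(N, t) * (N - t)`!)%:R.
Proof.
rewrite /derange mulr_sumr; apply: eq_bigr => t _.
rewrite -(bin_fact (leq_ord t)) mulnA mulnC !natrM.
by field; exact: natr_fact_neq0.
Qed.

Lemma derange_add (n m : nat) :
  derange (n + m) = \sum_(i < n.+1) \sum_(k < m.+1)
    (-1) ^+ (i + k) * ('C(n, i) * 'C(m, k) * (n + m - (i + k))`!)%:R.
Proof.
pose g t := (-1) ^+ t * ((n + m - t)`!)%:R : rat.
rewrite derange_incl_excl (eq_bigr (fun t : 'I_ _ => g t *+ 'C(n + m, t))).
  rewrite -binomial_convolution; apply: eq_bigr => i _; apply: eq_bigr => k _.
  by rewrite /g -mulr_natr !natrM; ring.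
by move=> t _; rewrite /g -mulr_natr !natrM; ring.
Qed.

Lemma sum_bin_fact_rev (m N : nat) :
  \sum_(k < m.+1) ('C(m, k))%:R * (-1) ^+ (m - k) * (k`!)%:R * ('C(k + N, N))%:R
  = \sum_(j < m.+1) (-1) ^+ j * ('C(m, j) * (m - j + N)`!)%:R / (N`!)%:R :> rat.
Proof.
rewrite (reindex_inj rev_ord_inj); apply: eq_bigr => j _ /=.
have le_jm : (j <= m)%N := leq_ord j.
rewrite subSS subKn // bin_sub // -(bin_fact (leq_addl (m - j) N)) addnK !natrM.
by field; rewrite !natr_fact_neq0.
Qed.

Theorem theorem2p1 (m n : nat) :
  derange (m + n) / (n`!)%:R =
  \sum_(l < n.+1) \sum_(k < m.+1)
     gbinom (k%:Z + (n - l)%:Z - 1) (n - l) * ('C(m, k))%:R * (-1) ^+ (m - k)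
       * (k`!)%:R / (l`!)%:R * derange l.
Proof.
pose a i := (-1) ^+ i / (i`!)%:R : rat.
pose w k := ('C(m, k))%:R * (-1) ^+ (m - k) * (k`!)%:R : rat.
symmetry; transitivity (\sum_(k < m.+1) w k *
    \sum_(i < n.+1) a i * ('C(k + (n - i), n - i))%:R).
  rewrite exchange_big; apply: eq_bigr => k _ /=.
  rewrite -sum_partial_sums_bin_pred mulr_sumr; apply: eq_bigr => l _.
  by rewrite gbinom_pred -mulrA (mulrC _^-1) derange_div_fact /w; ring.
under eq_bigr do rewrite mulr_sumr.
rewrite exchange_big addnC derange_add mulr_suml; apply: eq_bigr => i _ /=.
transitivity (a i * \sum_(k < m.+1) w k * ('C(k + (n - i), n - i))%:R).
  by rewrite mulr_sumr; apply: eq_bigr => k _; ring.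
rewrite sum_bin_fact_rev mulr_sumr mulr_suml; apply: eq_bigr => j _.
have le_in : (i <= n)%N := leq_ord i.
have -> : (m - j + (n - i) = n + m - (i + j))%N by have := leq_ord j; lia.
rewrite -(bin_fact le_in) /a exprD !natrM.
by field; rewrite !natr_fact_neq0 pnatr_eq0 -lt0n bin_gt0 le_in.
Qed.
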